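(* Let $\ell>0$, $g>0$, $T>0$, and let $f\colon\mathbb R\to\mathbb R$ be a $T$-periodic function of class $C^2$. Then the linear Whitney inverted pendulum problem has a $T$-periodic solution, i.e. there exists a $T$-periodic $C^2$ function $x\colon\mathbb R\to(-\ell,\ell)$ satisfying \[ \ddot x=\left(\frac{g}{\ell^2}\sqrt{\ell^2-x^2}-\frac{\dot x^2}{\ell^2-x^2}\right)x-\frac{\ell^2-x^2}{\ell^2}\,\ddot f(t)\quad\text{for all }t\in\mathbb R. \]
   Context: The linear Whitney inverted pendulum problem: a rod of length $\ell$, with its whole mass concentrated at its top, is pivoted (frictionlessly) on the floor of a car moving along a straight line, the pivot being at position $f(t)$ at time $t$; the rod moves in the vertical plane containing the line under gravity (gravitational constant $g$) and the motion of the car. Writing $x(t)$ for the horizontal displacement of the top of the rod relative to the pivot (so the height of the top is $\sqrt{\ell^2-x(t)^2}$), Newton's law gives the displayed differential equation. A solution for which the rod never touches the floor is one with $|x(t)|<\ell$ for all $t$; a $T$-periodic solution of the problem is such a solution which is $T$-periodic. *)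

From Stdlib Require Import Reals.
From Coquelicot Require Import Coquelicot.
Open Scope R_scope.

Definition C2 (f : R -> R) : Prop :=
  (forall t, ex_derive f t) /\
  (forall t, ex_derive (Derive f) t) /\
  (forall t, continuous (Derive (Derive f)) t).

Definition periodic (f : R -> R) (T : R) : Prop :=
  forall t, f (t + T) = f t.

(* Writing x = l sin θ, where θ is the angle of the rod from the vertical, the
   equation becomes l θ'' = g sin θ - f''(t) cos θ, and the rod stays off the
   floor as long as |θ| < π/2.  If |f''| <= P, the constants -atan (P/g) and
   atan (P/g) are a lower and an upper solution.  For m^2 above the Lipschitz
   constant of the right-hand side F, the T-periodic solutions are the fixed
   points of θ |-> G (m^2 θ - F (t, θ)), where G, the periodic Green operator
   of u'' - m^2 u, is positive and m^2 θ - F (t, θ) is nondecreasing in θ.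
   Iterating from the lower solution thus gives an increasing sequence of
   equi-Lipschitz periodic functions below the upper solution; it converges
   uniformly on compact intervals, so its limit is a fixed point. *)

From Stdlib Require Import Reals Lra Lia.
From Coquelicot Require Import Coquelicot.
Open Scope R_scope.

(** * Lipschitz functions and uniform convergence *)

Definition lipschitz (L : R) (φ : R -> R) : Prop :=
  forall x y, Rabs (φ x - φ y) <= L * Rabs (x - y).

Lemma lipschitz_continuous (L : R) (φ : R -> R) (x : R) : lipschitz L φ -> continuous φ x.
Proof.
  intros Hl; apply continuity_pt_filterlim; intros eps Heps.
  exists (eps / (Rabs L + 1)); split.
  { apply Rdiv_lt_0_compat; [lra | pose proof (Rabs_pos L); lra]. }
  intros y [_ Hy]; simpl in *; unfold R_dist in *.
  pose proof (Rabs_pos L); pose proof (RRle_abs L); pose proof (Rabs_pos (y - x)).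
  assert (Rabs (y - x) * (Rabs L + 1) < eps).
  { apply (Rmult_lt_compat_r (Rabs L + 1)) in Hy; [|lra].
    now replace (eps / (Rabs L + 1) * (Rabs L + 1)) with eps in Hy by (field; lra). }
  eapply Rle_lt_trans; [apply Hl | nra].
Qed.

Lemma lipschitz_derive_bound (φ dφ : R -> R) (L : R) :
  (forall x, is_derive φ x (dφ x)) -> (forall x, Rabs (dφ x) <= L) -> lipschitz L φ.
Proof.
  intros Hd Hb x y.
  destruct (MVT_gen φ y x dφ) as [c [_ ->]].
  - intros; apply Hd.
  - intros z _; apply continuity_pt_filterlim, (ex_derive_continuous (V := R_NormedModule)).
    eexists; apply Hd.
  - rewrite Rabs_mult; apply Rmult_le_compat_r; [apply Rabs_pos | apply Hb].
Qed.

Lemma lipschitz_lim (u : nat -> R -> R) (v : R -> R) (L : R) :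
  (forall n, lipschitz L (u n)) -> (forall x, is_lim_seq (fun n => u n x) (v x)) ->
  lipschitz L v.
Proof.
  intros Hu Hv x y.
  assert (Hlim := is_lim_seq_abs _ _ (is_lim_seq_minus' _ _ _ _ (Hv x) (Hv y))).
  exact (is_lim_seq_le _ _ _ _ (fun n => Hu n x y) Hlim (is_lim_seq_const _)).
Qed.

Lemma eventually_forall_le (P : nat -> nat -> Prop) (j : nat) :
  (forall k, eventually (P k)) -> eventually (fun n => forall k, (k <= j)%nat -> P k n).
Proof.
  intros HP; induction j as [|j IH].
  - apply (filter_imp (P 0%nat)); [|apply HP].
    intros n Hn k Hk; now replace k with 0%nat by lia.
  - apply (filter_imp (fun n => (forall k, (k <= j)%nat -> P k n) /\ P (S j) n)).
    + intros n [Hj HS] k Hk.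
      destruct (Nat.eq_dec k (S j)) as [->|]; [exact HS | apply Hj; lia].
    + now apply filter_and.
Qed.

Lemma grid_point_near (a δ : R) (j : nat) (x : R) : 0 < δ -> a <= x <= a + INR j * δ ->
  exists k, (k <= j)%nat /\ Rabs (x - (a + INR k * δ)) <= δ.
Proof.
  intros Hδ; induction j as [|j IH]; intros Hx.
  - exists 0%nat; split; [lia|]; simpl in *; apply Rabs_le_between; lra.
  - destruct (Rle_dec x (a + INR j * δ)) as [Hle|Hgt].
    + destruct IH as [k [Hk Hnear]]; [lra|]; exists k; split; [lia | exact Hnear].
    + exists (S j); split; [lia|]; rewrite S_INR in *; apply Rabs_le_between; nra.
Qed.

(* Only the finitely many points of a grid of mesh δ need to converge. *)
Lemma lipschitz_uniform_cvg (u : nat -> R -> R) (v : R -> R) (L a b : R) :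
  0 <= L -> a <= b ->
  (forall n, lipschitz L (u n)) -> (forall x, is_lim_seq (fun n => u n x) (v x)) ->
  forall eps, 0 < eps ->
  eventually (fun n => forall x, a <= x <= b -> Rabs (u n x - v x) <= eps).
Proof.
  intros HL Hab Hu Hv eps Heps.
  assert (Hvl : lipschitz L v) by now apply lipschitz_lim with u.
  set (δ := eps / (3 * (L + 1))).
  assert (Hδ : 0 < δ) by (apply Rdiv_lt_0_compat; lra).
  assert (HLδ : L * δ <= eps / 3).
  { replace (eps / 3) with ((L + 1) * δ) by (unfold δ; field; lra).
    apply Rmult_le_compat_r; lra. }
  destruct (nfloor_ex ((b - a) / δ)) as [j [_ Hj]]; [apply Rdiv_le_0_compat; lra|].
  assert (Hcover : b <= a + INR (S j) * δ).
  { rewrite S_INR; apply (Rmult_lt_compat_r δ) in Hj; [|lra].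
    replace ((b - a) / δ * δ) with (b - a) in Hj by (field; lra); lra. }
  assert (Hgrid : forall k, eventually
            (fun n => Rabs (u n (a + INR k * δ) - v (a + INR k * δ)) <= eps / 3)).
  { intros k; destruct (proj2 (is_lim_seq_spec _ _) (Hv (a + INR k * δ))
                          (mkposreal (eps / 3) ltac:(lra))) as [N HN].
    exists N; intros n Hn; left; apply HN, Hn. }
  generalize (eventually_forall_le _ (S j) Hgrid); apply filter_imp; intros n Hn x Hx.
  destruct (grid_point_near a δ (S j) x Hδ ltac:(lra)) as [k [Hk Hnear]].
  specialize (Hn k Hk); set (y := a + INR k * δ) in *.
  assert (Hux := Hu n x y); assert (Hvx := Hvl y x).
  assert (L * Rabs (x - y) <= L * δ) by (apply Rmult_le_compat_l; lra).
  rewrite Rabs_minus_sym in Hnear; rewrite (Rabs_minus_sym y x) in Hvx.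
  apply Rabs_le_between in Hn, Hux, Hvx; apply Rabs_le_between; lra.
Qed.

Lemma periodic_Derive (f : R -> R) (T : R) :
  (forall t, ex_derive f t) -> periodic f T -> periodic (Derive f) T.
Proof.
  intros Hd Hp t.
  assert (H : is_derive (fun s => f (s + T)) t (scal 1 (Derive f (t + T)))).
  { apply (is_derive_comp f (fun s => s + T)); [apply Derive_correct, Hd|].
    auto_derive; auto; ring. }
  apply is_derive_ext with (g := f) in H; [|intros; apply Hp].
  rewrite (is_derive_unique _ _ _ H); unfold scal; simpl; unfold mult; simpl; ring.
Qed.

Lemma periodic_Z (p : R -> R) (T : R) : periodic p T -> forall k t, p (t + IZR k * T) = p t.
Proof.
  intros Hp k; induction k as [|k IH|k IH] using Z.peano_ind; intros t.
  - f_equal; ring.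
  - rewrite succ_IZR, <- (IH t), <- (Hp (t + IZR k * T)); f_equal; ring.
  - rewrite <- Z.sub_1_r, minus_IZR, <- (IH t), <- (Hp (t + (IZR k - 1) * T)); f_equal; ring.
Qed.

Lemma periodic_continuous_bounded (p : R -> R) (T : R) : 0 < T -> (forall t, continuous p t) ->
  periodic p T -> exists P, forall t, Rabs (p t) <= P.
Proof.
  intros HT Hc Hp.
  destruct (continuity_ab_maj (fun t => Rabs (p t)) 0 T) as [tmax [Hmax _]]; [lra| |].
  { intros c _; apply continuity_pt_filterlim, continuous_Rabs_comp, Hc. }
  exists (Rabs (p tmax)); intros t.
  set (k := Zfloor (t / T)).
  assert (Hk := Zfloor_bound (t / T)); fold k in Hk.
  assert (Hs : 0 <= t - IZR k * T <= T).
  { destruct Hk as [Hk1 Hk2].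
    apply (Rmult_le_compat_r T) in Hk1; [|lra]; apply (Rmult_lt_compat_r T) in Hk2; [|lra].
    replace (t / T * T) with t in Hk1, Hk2 by (field; lra); lra. }
  replace t with ((t - IZR k * T) + IZR k * T) by ring.
  rewrite periodic_Z by exact Hp; apply Hmax, Hs.
Qed.

(** * The periodic Green operator of u'' - m^2 u *)

Lemma ex_RInt_continuous_R (φ : R -> R) (a b : R) :
  (forall x, continuous φ x) -> ex_RInt φ a b.
Proof. intros Hc; apply (ex_RInt_continuous (V := R_CompleteNormedModule)); auto. Qed.

Lemma is_derive_RInt_window (φ : R -> R) (T t : R) : (forall x, continuous φ x) ->
  is_derive (fun t => RInt φ t (t + T)) t (φ (t + T) - φ t).
Proof.
  intros Hc.
  assert (Hprim : forall x, is_derive (fun y => RInt φ 0 y) x (φ x)).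
  { intros x; apply (is_derive_RInt φ _ 0); [|apply Hc].
    apply filter_forall; intros y.
    apply (RInt_correct (V := R_CompleteNormedModule)), ex_RInt_continuous_R, Hc. }
  apply is_derive_ext with (fun t => RInt φ 0 (t + T) - RInt φ 0 t).
  { intros y; rewrite <- (RInt_Chasles φ 0 y (y + T)) by apply ex_RInt_continuous_R, Hc.
    unfold plus; simpl; ring. }
  apply (is_derive_minus (K := R_AbsRing) (V := R_NormedModule)); [|apply Hprim].
  replace (φ (t + T)) with (scal 1 (φ (t + T)))
    by (unfold scal; simpl; unfold mult; simpl; ring).
  apply (is_derive_comp (fun y => RInt φ 0 y) (fun y => y + T)); [apply Hprim|].
  auto_derive; auto; ring.
Qed.

Lemma exp_opp_mul (k x : R) : exp (- k * x) = / exp (k * x).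
Proof. rewrite <- exp_Ropp; f_equal; ring. Qed.

Lemma continuous_exp_weight (k : R) (h : R -> R) :
  (forall x, continuous h x) -> forall x, continuous (fun s => exp (k * s) * h s) x.
Proof.
  intros Hc x; apply (continuous_mult (K := R_AbsRing)); [|apply Hc].
  apply (ex_derive_continuous (V := R_NormedModule)); auto_derive; auto.
Qed.

Section PeriodicGreen.

Variables m T : R.
Hypothesis m_pos : 0 < m.
Hypothesis T_pos : 0 < T.

Definition exp_window (k : R) (h : R -> R) (t : R) : R :=
  RInt (fun s => exp (k * s) * h s) t (t + T).

Definition green_scale : R := / (2 * m * (1 - exp (- m * T))).

(* [green h] is the T-periodic solution of u'' = m^2 u - h: the convolution of
   h over one period with the periodic Green's function
   cosh (m (s - t - T/2)) / (2 m sinh (m T / 2)). *)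
Definition green (h : R -> R) (t : R) : R :=
  green_scale * (exp (m * t) * exp_window (- m) h t
                 + exp (- m * (t + T)) * exp_window m h t).

Definition green_deriv (h : R -> R) (t : R) : R :=
  m * green_scale * (exp (m * t) * exp_window (- m) h t
                     - exp (- m * (t + T)) * exp_window m h t).

Lemma exp_window_is_derive (k : R) (h : R -> R) (t : R) :
  (forall x, continuous h x) -> periodic h T ->
  is_derive (exp_window k h) t ((exp (k * (t + T)) - exp (k * t)) * h t).
Proof.
  intros Hc Hp; unfold exp_window.
  replace ((exp (k * (t + T)) - exp (k * t)) * h t)
    with (exp (k * (t + T)) * h (t + T) - exp (k * t) * h t) by (rewrite (Hp t); ring).
  apply (is_derive_RInt_window (fun s => exp (k * s) * h s)).
  intros; apply continuous_exp_weight, Hc.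
Qed.

Lemma Derive_exp_window (k : R) (h : R -> R) (t : R) :
  (forall x, continuous h x) -> periodic h T ->
  Derive (fun x => exp_window k h x) t = (exp (k * (t + T)) - exp (k * t)) * h t.
Proof. intros Hc Hp; now apply is_derive_unique, exp_window_is_derive. Qed.

Lemma exp_window_shift (k : R) (h : R -> R) (t : R) :
  (forall x, continuous h x) -> periodic h T ->
  exp_window k h (t + T) = exp (k * T) * exp_window k h t.
Proof.
  intros Hc Hp; unfold exp_window.
  assert (Hex := ex_RInt_continuous_R (fun s => exp (k * s) * h s) (1 * t + T) (1 * (t + T) + T)
                   (continuous_exp_weight k h Hc)).
  assert (Hlin := RInt_comp_lin (fun s => exp (k * s) * h s) 1 T t (t + T) Hex).
  replace (1 * t + T) with (t + T) in Hlin by ring.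
  replace (1 * (t + T) + T) with (t + T + T) in Hlin by ring.
  rewrite <- Hlin.
  rewrite <- (RInt_scal (V := R_CompleteNormedModule))
    by (apply ex_RInt_continuous_R; intros; apply continuous_exp_weight, Hc).
  apply RInt_ext; intros s _; unfold scal; simpl; unfold mult; simpl.
  replace (1 * s + T) with (s + T) by ring.
  rewrite Hp, Rmult_plus_distr_l, exp_plus; ring.
Qed.

Lemma exp_window_const (k v t : R) : k <> 0 ->
  exp_window k (fun _ => v) t = v / k * (exp (k * (t + T)) - exp (k * t)).
Proof.
  intros Hk; apply is_RInt_unique.
  replace (v / k * (exp (k * (t + T)) - exp (k * t)))
    with (minus (v / k * exp (k * (t + T))) (v / k * exp (k * t)))
    by (unfold minus, plus, opp; simpl; ring).
  apply (is_RInt_derive (V := R_CompleteNormedModule) (fun s => v / k * exp (k * s))).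
  - intros x _; auto_derive; auto; field; auto.
  - intros x _; apply continuous_exp_weight; intros; apply continuous_const.
Qed.

Lemma exp_window_le (k : R) (h1 h2 : R -> R) (t : R) :
  (forall x, continuous h1 x) -> (forall x, continuous h2 x) ->
  (forall s, t <= s <= t + T -> h1 s <= h2 s) ->
  exp_window k h1 t <= exp_window k h2 t.
Proof.
  intros H1 H2 Hle; apply RInt_le; try lra;
    try (apply ex_RInt_continuous_R; intros; apply continuous_exp_weight; auto).
  intros s Hs; apply Rmult_le_compat_l; [left; apply exp_pos | apply Hle; lra].
Qed.

Lemma exp_window_abs_le (k : R) (h : R -> R) (B t : R) :
  (forall x, continuous h x) -> (forall s, t <= s <= t + T -> Rabs (h s) <= B) ->
  Rabs (exp_window k h t) <= exp_window k (fun _ => B) t.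
Proof.
  intros Hc Hb; unfold exp_window.
  eapply Rle_trans; [apply abs_RInt_le; [lra|]|].
  { apply ex_RInt_continuous_R; intros; apply continuous_exp_weight, Hc. }
  apply RInt_le; [lra | | |].
  - apply ex_RInt_continuous_R; intros; apply continuous_Rabs_comp, continuous_exp_weight, Hc.
  - apply ex_RInt_continuous_R, continuous_exp_weight; intros; apply continuous_const.
  - intros s Hs; rewrite Rabs_mult, Rabs_pos_eq by (left; apply exp_pos).
    apply Rmult_le_compat_l; [left; apply exp_pos | apply Hb; lra].
Qed.

Lemma exp_window_minus (k : R) (h1 h2 : R -> R) (t : R) :
  (forall x, continuous h1 x) -> (forall x, continuous h2 x) ->
  exp_window k (fun s => h1 s - h2 s) t = exp_window k h1 t - exp_window k h2 t.
Proof.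
  intros H1 H2; unfold exp_window.
  rewrite <- (RInt_minus (V := R_CompleteNormedModule))
    by (apply ex_RInt_continuous_R; intros; apply continuous_exp_weight; auto).
  apply RInt_ext; intros; unfold minus, plus, opp; simpl; ring.
Qed.

Lemma one_lt_exp_mT : 1 < exp (m * T).
Proof. rewrite <- exp_0; apply exp_increasing; nra. Qed.

Lemma green_scale_pos : 0 < green_scale.
Proof.
  pose proof one_lt_exp_mT; unfold green_scale; rewrite exp_opp_mul.
  apply Rinv_0_lt_compat.
  assert (/ exp (m * T) < 1) by (rewrite <- Rinv_1; apply Rinv_lt_contravar; lra).
  apply Rmult_lt_0_compat; lra.
Qed.

Lemma is_derive_green (h : R -> R) (t : R) :
  (forall x, continuous h x) -> periodic h T -> is_derive (green h) t (green_deriv h t).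
Proof.
  intros Hc Hp; unfold green.
  auto_derive; [repeat split; eexists; apply exp_window_is_derive; auto|].
  rewrite !Derive_exp_window by assumption.
  unfold green_deriv; rewrite !exp_opp_mul, !Rmult_plus_distr_l, !exp_plus.
  pose proof (exp_pos (m * t)); pose proof (exp_pos (m * T)).
  field; lra.
Qed.

Lemma is_derive_green_deriv (h : R -> R) (t : R) :
  (forall x, continuous h x) -> periodic h T ->
  is_derive (green_deriv h) t (m * m * green h t - h t).
Proof.
  intros Hc Hp; unfold green_deriv.
  auto_derive; [repeat split; eexists; apply exp_window_is_derive; auto|].
  rewrite !Derive_exp_window by assumption.
  unfold green, green_scale; rewrite !exp_opp_mul, !Rmult_plus_distr_l, !exp_plus.
  pose proof (exp_pos (m * t)); pose proof one_lt_exp_mT.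
  field; lra.
Qed.

Lemma green_periodic (h : R -> R) :
  (forall x, continuous h x) -> periodic h T -> periodic (green h) T.
Proof.
  intros Hc Hp t; unfold green.
  rewrite !exp_window_shift by assumption.
  rewrite !exp_opp_mul, !Rmult_plus_distr_l, !exp_plus.
  pose proof (exp_pos (m * t)); pose proof (exp_pos (m * T)).
  field; lra.
Qed.

Lemma green_const (v t : R) : green (fun _ => v) t = v / (m * m).
Proof.
  unfold green, green_scale; rewrite !exp_window_const by lra.
  rewrite !exp_opp_mul, !Rmult_plus_distr_l, !exp_plus.
  pose proof (exp_pos (m * t)); pose proof one_lt_exp_mT.
  field; lra.
Qed.

Lemma green_le (h1 h2 : R -> R) (t : R) :
  (forall x, continuous h1 x) -> (forall x, continuous h2 x) ->
  (forall s, t <= s <= t + T -> h1 s <= h2 s) -> green h1 t <= green h2 t.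
Proof.
  intros H1 H2 Hle; unfold green.
  apply Rmult_le_compat_l; [left; apply green_scale_pos|].
  pose proof (exp_pos (m * t)); pose proof (exp_pos (- m * (t + T))).
  apply Rplus_le_compat; apply Rmult_le_compat_l; try lra; apply exp_window_le; auto.
Qed.

Lemma green_minus (h1 h2 : R -> R) (t : R) :
  (forall x, continuous h1 x) -> (forall x, continuous h2 x) ->
  green (fun s => h1 s - h2 s) t = green h1 t - green h2 t.
Proof. intros H1 H2; unfold green; rewrite !exp_window_minus by assumption; ring. Qed.

Lemma green_abs_le (h : R -> R) (B t : R) :
  (forall x, continuous h x) -> (forall s, t <= s <= t + T -> Rabs (h s) <= B) ->
  Rabs (green h t) <= B / (m * m).
Proof.
  intros Hc Hb; apply Rabs_le_between.
  replace (- (B / (m * m))) with (- B / (m * m)) by (field; lra).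
  rewrite <- (green_const B t), <- (green_const (- B) t).
  split; apply green_le; auto; try (intros; apply continuous_const);
    intros s Hs; specialize (Hb s Hs); apply Rabs_le_between in Hb; lra.
Qed.

Lemma green_deriv_abs_le (h : R -> R) (B t : R) :
  (forall x, continuous h x) -> (forall s, t <= s <= t + T -> Rabs (h s) <= B) ->
  Rabs (green_deriv h t) <= B / m.
Proof.
  intros Hc Hb.
  replace (B / m) with (m * green (fun _ => B) t) by (rewrite green_const; field; lra).
  unfold green_deriv, green.
  pose proof green_scale_pos; pose proof (exp_pos (m * t)); pose proof (exp_pos (- m * (t + T))).
  rewrite Rabs_mult, (Rabs_pos_eq (m * green_scale)) by nra; rewrite Rmult_assoc.
  apply Rmult_le_compat_l; [lra|].
  apply Rmult_le_compat_l; [lra|].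
  unfold Rminus; eapply Rle_trans; [apply Rabs_triang|].
  rewrite Rabs_Ropp, !Rabs_mult, (Rabs_pos_eq (exp (m * t))), (Rabs_pos_eq (exp (- m * (t + T))))
    by lra.
  apply Rplus_le_compat; apply Rmult_le_compat_l; try lra; apply exp_window_abs_le; auto.
Qed.

End PeriodicGreen.

(** * Monotone iteration between constant lower and upper solutions *)

Section MonotoneIteration.

Variables (F : R -> R -> R) (T L θ0 m : R).
Hypothesis T_pos : 0 < T.
Hypothesis m_pos : 0 < m.
Hypothesis L_le : L <= m * m.
Hypothesis θ0_nonneg : 0 <= θ0.
Hypothesis F_continuous : forall u : R -> R,
  (forall t, continuous u t) -> forall t, continuous (fun s => F s (u s)) t.
Hypothesis F_periodic : forall t x, F (t + T) x = F t x.
Hypothesis F_lipschitz : forall t, lipschitz L (F t).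
Hypothesis F_lower : forall t, F t (- θ0) <= 0.
Hypothesis F_upper : forall t, 0 <= F t θ0.

Definition shifted_rhs (t x : R) : R := m * m * x - F t x.

Lemma shifted_rhs_le (t x y : R) : x <= y -> shifted_rhs t x <= shifted_rhs t y.
Proof.
  intros Hxy; unfold shifted_rhs.
  assert (HF := F_lipschitz t y x).
  rewrite (Rabs_pos_eq (y - x)) in HF by lra; apply Rabs_le_between in HF.
  assert (0 <= (m * m - L) * (y - x)) by (apply Rmult_le_pos; lra); lra.
Qed.

Lemma shifted_rhs_lipschitz (t x y : R) :
  Rabs (shifted_rhs t x - shifted_rhs t y) <= 2 * (m * m) * Rabs (x - y).
Proof.
  unfold shifted_rhs.
  replace (m * m * x - F t x - (m * m * y - F t y))
    with (m * m * (x - y) - (F t x - F t y)) by ring.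
  unfold Rminus at 1; eapply Rle_trans; [apply Rabs_triang|].
  rewrite Rabs_Ropp, Rabs_mult, (Rabs_pos_eq (m * m)) by nra.
  assert (HF := F_lipschitz t x y); pose proof (Rabs_pos (x - y)); nra.
Qed.

Lemma shifted_rhs_abs_le (t x : R) : - θ0 <= x <= θ0 -> Rabs (shifted_rhs t x) <= m * m * θ0.
Proof.
  intros Hx; apply Rabs_le_between.
  assert (Hlo := shifted_rhs_le t (- θ0) x ltac:(lra)).
  assert (Hhi := shifted_rhs_le t x θ0 ltac:(lra)).
  unfold shifted_rhs in *; pose proof (F_lower t); pose proof (F_upper t); nra.
Qed.

Lemma shifted_rhs_continuous (u : R -> R) :
  (forall t, continuous u t) -> forall t, continuous (fun s => shifted_rhs s (u s)) t.
Proof.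
  intros Hu t; unfold shifted_rhs.
  apply (continuous_minus (K := R_AbsRing) (V := R_NormedModule)); [|now apply F_continuous].
  apply (continuous_mult (K := R_AbsRing)); [apply continuous_const | apply Hu].
Qed.

Lemma shifted_rhs_periodic (u : R -> R) :
  periodic u T -> periodic (fun s => shifted_rhs s (u s)) T.
Proof. intros Hu t; unfold shifted_rhs; now rewrite Hu, F_periodic. Qed.

Fixpoint iterate (n : nat) : R -> R :=
  match n with
  | O => fun _ => - θ0
  | S n => green m T (fun s => shifted_rhs s (iterate n s))
  end.

Lemma iterate_continuous_periodic_bounded (n : nat) :
  (forall t, continuous (iterate n) t) /\ periodic (iterate n) T /\
  (forall t, - θ0 <= iterate n t <= θ0).
Proof.
  induction n as [|n (Hc & Hp & Hb)]; simpl.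
  - repeat split; intros; try apply continuous_const; lra.
  - assert (Hsc := shifted_rhs_continuous _ Hc); assert (Hsp := shifted_rhs_periodic _ Hp).
    split; [|split].
    + intros t; apply (ex_derive_continuous (V := R_NormedModule)).
      eexists; apply is_derive_green; auto.
    + apply green_periodic; auto.
    + intros t; apply Rabs_le_between.
      replace θ0 with (m * m * θ0 / (m * m)) by (field; lra).
      apply green_abs_le; auto; intros s _; apply shifted_rhs_abs_le, Hb.
Qed.

Lemma iterate_le_S (n : nat) (t : R) : iterate n t <= iterate (S n) t.
Proof.
  revert t; induction n as [|n IH]; intros t.
  - apply (iterate_continuous_periodic_bounded 1).
  - apply (green_le m T m_pos T_pos (fun s => shifted_rhs s (iterate n s))
                                    (fun s => shifted_rhs s (iterate (S n) s))).
    + apply shifted_rhs_continuous, iterate_continuous_periodic_bounded.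
    + apply shifted_rhs_continuous, iterate_continuous_periodic_bounded.
    + intros s _; apply shifted_rhs_le, IH.
Qed.

Lemma iterate_lipschitz (n : nat) : lipschitz (m * θ0) (iterate n).
Proof.
  destruct n as [|n]; simpl.
  - intros x y; rewrite Rminus_diag, Rabs_R0.
    apply Rmult_le_pos; [nra | apply Rabs_pos].
  - destruct (iterate_continuous_periodic_bounded n) as (Hc & Hp & Hb).
    assert (Hsc := shifted_rhs_continuous _ Hc); assert (Hsp := shifted_rhs_periodic _ Hp).
    apply lipschitz_derive_bound with (green_deriv m T (fun s => shifted_rhs s (iterate n s))).
    + intros; apply is_derive_green; auto.
    + intros t; replace (m * θ0) with (m * m * θ0 / m) by (field; lra).
      apply green_deriv_abs_le; auto; intros s _; apply shifted_rhs_abs_le, Hb.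
Qed.

Definition iterate_limit (t : R) : R := real (Lim_seq (fun n => iterate n t)).

Lemma is_lim_seq_iterate (t : R) : is_lim_seq (fun n => iterate n t) (iterate_limit t).
Proof.
  apply Lim_seq_correct', (ex_finite_lim_seq_incr _ θ0).
  - intros; apply iterate_le_S.
  - intros n; apply iterate_continuous_periodic_bounded.
Qed.

Lemma iterate_limit_bounds (t : R) : - θ0 <= iterate_limit t <= θ0.
Proof.
  split.
  - apply (is_lim_seq_incr_compare (fun n => iterate n t) _ (is_lim_seq_iterate t) 
             (fun n => iterate_le_S n t) 0).
  - apply (is_lim_seq_le (fun n => iterate n t) (fun _ => θ0) _ _
             (fun n => proj2 (proj2 (proj2 (iterate_continuous_periodic_bounded n)) t))
             (is_lim_seq_iterate t) (is_lim_seq_const θ0)).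
Qed.

Lemma iterate_limit_continuous (t : R) : continuous iterate_limit t.
Proof.
  apply (lipschitz_continuous (m * θ0)), (lipschitz_lim iterate).
  - apply iterate_lipschitz.
  - apply is_lim_seq_iterate.
Qed.

Lemma iterate_limit_periodic : periodic iterate_limit T.
Proof.
  intros t; unfold iterate_limit; f_equal; apply Lim_seq_ext.
  intros n; apply iterate_continuous_periodic_bounded.
Qed.

Lemma is_lim_seq_green_iterate (t : R) :
  is_lim_seq (fun n => green m T (fun s => shifted_rhs s (iterate n s)) t)
             (green m T (fun s => shifted_rhs s (iterate_limit s)) t).
Proof.
  assert (Hlc := shifted_rhs_continuous _ iterate_limit_continuous).
  apply is_lim_seq_spec; intros eps.
  assert (Hδ : 0 < eps / 4) by (destruct eps; simpl; lra).
  generalize (lipschitz_uniform_cvg iterate iterate_limit (m * θ0) t (t + T)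
                ltac:(nra) ltac:(lra) iterate_lipschitz is_lim_seq_iterate _ Hδ).
  apply filter_imp; intros n Hn.
  destruct (iterate_continuous_periodic_bounded n) as (Hc & _).
  rewrite <- green_minus by (auto; apply shifted_rhs_continuous, Hc).
  eapply Rle_lt_trans.
  - apply (green_abs_le m T m_pos T_pos _ (2 * (m * m) * (eps / 4))).
    + intros; apply (continuous_minus (K := R_AbsRing) (V := R_NormedModule));
        [apply shifted_rhs_continuous, Hc | apply Hlc].
    + intros s Hs; eapply Rle_trans; [apply shifted_rhs_lipschitz|].
      apply Rmult_le_compat_l; [nra | now apply Hn].
  - replace (2 * (m * m) * (eps / 4) / (m * m)) with (eps / 2) by (field; lra).
    destruct eps; simpl in *; lra.
Qed.

Lemma iterate_limit_fixed (t : R) :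
  iterate_limit t = green m T (fun s => shifted_rhs s (iterate_limit s)) t.
Proof.
  assert (Hnext := proj1 (is_lim_seq_incr_1 _ _) (is_lim_seq_iterate t)); simpl in Hnext.
  apply is_lim_seq_unique in Hnext.
  rewrite (is_lim_seq_unique _ _ (is_lim_seq_green_iterate t)) in Hnext.
  now injection Hnext.
Qed.

Lemma iterate_limit_solves (t : R) :
  let dθ := green_deriv m T (fun s => shifted_rhs s (iterate_limit s)) in
  is_derive iterate_limit t (dθ t) /\ is_derive dθ t (F t (iterate_limit t)).
Proof.
  assert (Hc := shifted_rhs_continuous _ iterate_limit_continuous).
  assert (Hp := shifted_rhs_periodic _ iterate_limit_periodic).
  split.
  - apply is_derive_ext with (green m T (fun s => shifted_rhs s (iterate_limit s))).
    + intros s; symmetry; apply iterate_limit_fixed.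
    + apply is_derive_green; auto.
  - replace (F t (iterate_limit t))
      with (m * m * green m T (fun s => shifted_rhs s (iterate_limit s)) t
            - shifted_rhs t (iterate_limit t))
      by (rewrite <- iterate_limit_fixed; unfold shifted_rhs; ring).
    now apply (is_derive_green_deriv m T m_pos T_pos (fun s => shifted_rhs s (iterate_limit s))).
Qed.

End MonotoneIteration.

Theorem periodic_solution_between (F : R -> R -> R) (T L θ0 : R) :
  0 < T -> 0 <= L -> 0 <= θ0 ->
  (forall u : R -> R,
     (forall t, continuous u t) -> forall t, continuous (fun s => F s (u s)) t) ->
  (forall t x, F (t + T) x = F t x) ->
  (forall t, lipschitz L (F t)) ->
  (forall t, F t (- θ0) <= 0) -> (forall t, 0 <= F t θ0) ->
  exists θ dθ : R -> R,
    periodic θ T /\ (forall t, - θ0 <= θ t <= θ0) /\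
    (forall t, is_derive θ t (dθ t)) /\ (forall t, is_derive dθ t (F t (θ t))).
Proof.
  intros HT HL Hθ0 Hc Hp Hlip Hlo Hup.
  set (m := L + 1).
  assert (Hm : 0 < m) by (unfold m; lra).
  assert (HLm : L <= m * m) by (unfold m; nra).
  exists (iterate_limit F T θ0 m),
    (green_deriv m T (fun s => shifted_rhs F m s (iterate_limit F T θ0 m s))).
  split; [|split; [|split]].
  - now apply (iterate_limit_periodic F T L).
  - now apply (iterate_limit_bounds F T L).
  - intros t; now apply (iterate_limit_solves F T L θ0 m).
  - intros t; now apply (iterate_limit_solves F T L θ0 m).
Qed.

(** * The inverted pendulum *)

Definition pendulum_angle_rhs (g l : R) (p : R -> R) (t θ : R) : R :=
  (g * sin θ - p t * cos θ) / l.

Definition whitney_ode (l g : R) (f x : R -> R) : Prop :=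
  forall t,
    Derive (Derive x) t =
      (g / l ^ 2 * sqrt (l ^ 2 - x t ^ 2) - (Derive x t) ^ 2 / (l ^ 2 - x t ^ 2)) * x t
      - (l ^ 2 - x t ^ 2) / l ^ 2 * Derive (Derive f) t.

Lemma continuous_sin_comp (u : R -> R) (t : R) :
  continuous u t -> continuous (fun s => sin (u s)) t.
Proof.
  intros Hu; apply (continuous_comp u sin); [exact Hu|].
  apply (ex_derive_continuous (V := R_NormedModule)); auto_derive; auto.
Qed.

Lemma continuous_cos_comp (u : R -> R) (t : R) :
  continuous u t -> continuous (fun s => cos (u s)) t.
Proof.
  intros Hu; apply (continuous_comp u cos); [exact Hu|].
  apply (ex_derive_continuous (V := R_NormedModule)); auto_derive; auto.
Qed.

Lemma pendulum_angle_rhs_continuous (g l : R) (p u : R -> R) (t : R) :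
  continuous p t -> continuous u t ->
  continuous (fun s => pendulum_angle_rhs g l p s (u s)) t.
Proof.
  intros Hp Hu; unfold pendulum_angle_rhs, Rdiv.
  apply (continuous_mult (K := R_AbsRing)); [|apply continuous_const].
  apply (continuous_minus (V := R_NormedModule));
    apply (continuous_mult (K := R_AbsRing));
    auto using continuous_const, continuous_sin_comp, continuous_cos_comp.
Qed.

Lemma pendulum_angle_rhs_lipschitz (g l : R) (p : R -> R) (P t : R) :
  0 < l -> 0 < g -> Rabs (p t) <= P ->
  lipschitz ((g + P) / l) (pendulum_angle_rhs g l p t).
Proof.
  intros Hl Hg HP.
  apply lipschitz_derive_bound with (fun θ => (g * cos θ + p t * sin θ) / l).
  - intros θ; unfold pendulum_angle_rhs; auto_derive; [lra | field; lra].
  - intros θ; unfold Rdiv; rewrite Rabs_mult, (Rabs_pos_eq (/ l))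
      by (left; apply Rinv_0_lt_compat, Hl).
    apply Rmult_le_compat_r; [left; apply Rinv_0_lt_compat, Hl|].
    eapply Rle_trans; [apply Rabs_triang|].
    rewrite !Rabs_mult, (Rabs_pos_eq g) by lra.
    assert (Rabs (cos θ) <= 1) by (apply Rabs_le_between, COS_bound).
    assert (Rabs (sin θ) <= 1) by (apply Rabs_le_between, SIN_bound).
    pose proof (Rabs_pos (p t)); pose proof (Rabs_pos (sin θ)); nra.
Qed.

(* atan (P / g) is the tilt at which gravity balances the largest horizontal
   acceleration P of the car. *)
Lemma pendulum_angle_rhs_atan (g l : R) (p : R -> R) (P t : R) :
  0 < l -> 0 < g -> Rabs (p t) <= P ->
  pendulum_angle_rhs g l p t (- atan (P / g)) <= 0 <= pendulum_angle_rhs g l p t (atan (P / g)).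
Proof.
  intros Hl Hg HP; apply Rabs_le_between in HP.
  set (θ0 := atan (P / g)).
  assert (Hcos : 0 < cos θ0)
    by (pose proof (atan_bound (P / g)); apply cos_gt_0; unfold θ0; lra).
  assert (Hsin : sin θ0 = P / g * cos θ0).
  { unfold θ0; rewrite sin_atan, cos_atan.
    assert (0 < sqrt (1 + (P / g)²)) by (apply sqrt_lt_R0; pose proof (Rle_0_sqr (P / g)); lra).
    field; lra. }
  unfold pendulum_angle_rhs; rewrite sin_neg, cos_neg, Hsin.
  replace ((g * - (P / g * cos θ0) - p t * cos θ0) / l) with (- (cos θ0 * (P + p t) / l))
    by (field; lra).
  replace ((g * (P / g * cos θ0) - p t * cos θ0) / l) with (cos θ0 * (P - p t) / l)
    by (field; lra).
  assert (0 <= cos θ0 * (P + p t) / l) by (apply Rdiv_le_0_compat; [nra | lra]).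
  assert (0 <= cos θ0 * (P - p t) / l) by (apply Rdiv_le_0_compat; [nra | lra]).
  lra.
Qed.

Lemma pythagoras_mul_sin (l θ : R) : l ^ 2 - (l * sin θ) ^ 2 = (l * cos θ) ^ 2.
Proof. pose proof (sin2_cos2 θ); unfold Rsqr in *; nra. Qed.

Lemma mul_sin_lt (l θ : R) : 0 < l -> 0 < cos θ -> - l < l * sin θ < l.
Proof.
  intros Hl Hcos; pose proof (pythagoras_mul_sin l θ).
  assert (0 < (l * cos θ) ^ 2) by (apply pow_lt, Rmult_lt_0_compat; auto).
  split; nra.
Qed.

Lemma whitney_of_angle (l g : R) (f θ dθ : R -> R) :
  0 < l -> (forall t, continuous (Derive (Derive f)) t) ->
  (forall t, is_derive θ t (dθ t)) ->
  (forall t, is_derive dθ t (pendulum_angle_rhs g l (Derive (Derive f)) t (θ t))) ->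
  (forall t, - (PI / 2) < θ t < PI / 2) ->
  C2 (fun t => l * sin (θ t)) /\ (forall t, - l < l * sin (θ t) < l) /\
  whitney_ode l g f (fun t => l * sin (θ t)).
Proof.
  intros Hl Hp Hθ Hdθ Hrange.
  set (p := Derive (Derive f)) in *.
  set (F := fun t => pendulum_angle_rhs g l p t (θ t)) in *.
  set (dx := fun t => l * (cos (θ t) * dθ t)).
  set (ddx := fun t => l * (cos (θ t) * F t - sin (θ t) * (dθ t * dθ t))).
  assert (Hθc : forall t, continuous θ t)
    by (intros; apply (ex_derive_continuous (V := R_NormedModule)); eexists; apply Hθ).
  assert (Hdθc : forall t, continuous dθ t)
    by (intros; apply (ex_derive_continuous (V := R_NormedModule)); eexists; apply Hdθ).
  assert (Hcos : forall t, 0 < cos (θ t)) by (intros; apply cos_gt_0; apply Hrange).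
  assert (Hx : forall t, is_derive (fun t => l * sin (θ t)) t (dx t)).
  { intros t; unfold dx; auto_derive; [eexists; apply Hθ|].
    replace (Derive (fun t => θ t) t) with (dθ t) by (symmetry; now apply is_derive_unique).
    ring. }
  assert (Hdx : forall t, is_derive dx t (ddx t)).
  { intros t; unfold dx, ddx; auto_derive; [split; [|split; [|exact I]]; eexists; eauto|].
    replace (Derive (fun t => θ t) t) with (dθ t) by (symmetry; now apply is_derive_unique).
    replace (Derive (fun t => dθ t) t) with (F t) by (symmetry; now apply is_derive_unique).
    ring. }
  assert (HDx : forall t, Derive (fun t => l * sin (θ t)) t = dx t)
    by (intros; apply is_derive_unique, Hx).
  assert (HDDx : forall t, Derive (Derive (fun t => l * sin (θ t))) t = ddx t).
  { intros t; rewrite (Derive_ext _ _ t HDx); apply is_derive_unique, Hdx. }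
  split; [split; [|split]|split].
  - intros t; eexists; apply Hx.
  - intros t; apply (ex_derive_ext dx); [intros; symmetry; apply HDx | eexists; apply Hdx].
  - intros t; apply continuous_ext with ddx; [intros; symmetry; apply HDDx|].
    assert (HFc : continuous F t) by now apply pendulum_angle_rhs_continuous.
    unfold ddx; apply (continuous_mult (K := R_AbsRing)); [apply continuous_const|].
    apply (continuous_minus (V := R_NormedModule)); apply (continuous_mult (K := R_AbsRing));
      auto using continuous_sin_comp, continuous_cos_comp.
    apply (continuous_mult (K := R_AbsRing)); auto.
  - intros t; now apply mul_sin_lt.
  - intros t; pose proof (Hcos t).
    rewrite HDDx, HDx, pythagoras_mul_sin, sqrt_pow2 by nra.
    unfold ddx, dx, F, pendulum_angle_rhs; fold p; field; lra.
Qed.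

Lemma atan_nonneg_lt_PI2 (x : R) : 0 <= x -> 0 <= atan x < PI / 2.
Proof.
  intros Hx; split; [|apply atan_bound].
  rewrite <- atan_0; destruct Hx as [Hx | <-]; [left; now apply atan_increasing | lra].
Qed.

Theorem theorem1p1 (l g T : R) (f : R -> R) :
  0 < l -> 0 < g -> 0 < T ->
  C2 f -> periodic f T ->
  exists x : R -> R,
    C2 x /\ periodic x T /\ (forall t, - l < x t < l) /\
    (forall t,
       Derive (Derive x) t =
         (g / l ^ 2 * sqrt (l ^ 2 - x t ^ 2)
            - (Derive x t) ^ 2 / (l ^ 2 - x t ^ 2)) * x t
         - (l ^ 2 - x t ^ 2) / l ^ 2 * Derive (Derive f) t).
Proof.
  intros Hl Hg HT (Hf1 & Hf2 & Hf3) Hper.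
  set (p := Derive (Derive f)).
  assert (Hpp : periodic p T) by (apply periodic_Derive, periodic_Derive; auto).
  destruct (periodic_continuous_bounded p T HT Hf3 Hpp) as [P HP].
  assert (HP0 : 0 <= P) by (eapply Rle_trans; [apply Rabs_pos | apply (HP 0)]).
  assert (Hθ0 := atan_nonneg_lt_PI2 (P / g) ltac:(apply Rdiv_le_0_compat; lra)).
  destruct (periodic_solution_between (pendulum_angle_rhs g l p) T ((g + P) / l)
              (atan (P / g))) as (θ & dθ & Hθp & Hθb & Hθ & Hdθ); try lra.
  - apply Rdiv_le_0_compat; lra.
  - intros; apply pendulum_angle_rhs_continuous; auto.
  - intros t x; unfold pendulum_angle_rhs; now rewrite (Hpp t).
  - intros t; apply pendulum_angle_rhs_lipschitz; auto.
  - intros t; apply (pendulum_angle_rhs_atan g l p P t); auto.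
  - intros t; apply (pendulum_angle_rhs_atan g l p P t); auto.
  - destruct (whitney_of_angle l g f θ dθ) as (HC2 & Hrange & Hode); auto.
    { intros t; specialize (Hθb t); lra. }
    exists (fun t => l * sin (θ t)); split; [|split; [|split]]; auto.
    intros t; unfold periodic in Hθp; now rewrite Hθp.
Qed.
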